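(* Let $A$ be a C*-algebra, $K$ an arbitrary set, and $\tau_g:A\to A$ a $*$-homomorphism for each $g\in K$. Assume that $A$ is generated (as a C*-algebra, i.e. $p(\mathfrak{V})$ is dense in $A$) by a subset $\mathfrak{V}\subset A$ for which $\tau_g(\mathfrak{V})\subset p(\mathfrak{V})$ for every $g\in K$. Also assume that $\{\tau_g(a):g\in K\}$ is totally bounded in $A$ (in norm) for every $a\in\mathfrak{V}$. Then $\{\tau_g(a):g\in K\}$ is totally bounded in $A$ for every $a\in A$.
   Context: For $\mathfrak{V}\subset A$, $p(\mathfrak{V})$ denotes the set of all finite complex linear combinations of finite products of elements of $\mathfrak{V}\cup\mathfrak{V}^*$, where $\mathfrak{V}^*=\{a^*:a\in\mathfrak{V}\}$. A set $B$ is totally bounded if for every $\varepsilon>0$ there is a finite set $F$ such that every element of $B$ is within distance $\varepsilon$ of some element of $F$. *)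

From HB Require Import structures.
From mathcomp Require Import all_boot all_order all_algebra.
From mathcomp Require Import all_classical all_reals all_analysis.
From mathcomp Require Import complex.
Set Implicit Arguments. Unset Strict Implicit. Unset Printing Implicit Defensive.
Import Order.TTheory GRing.Theory Num.Theory.
Import numFieldNormedType.Exports.
Local Open Scope classical_set_scope.
Local Open Scope ring_scope.
Local Open Scope complex_scope.

Definition is_Cstar_algebra (R : realType) (A : completeNormedModType R[i])
    (mul : A -> A -> A) (star : A -> A) : Prop :=
  (forall a b c : A, mul a (mul b c) = mul (mul a b) c) /\
      (forall a b c : A, mul a (b + c) = mul a b + mul a c) /\
      (forall a b c : A, mul (a + b) c = mul a c + mul b c) /\
      (forall (k : R[i]) (a b : A), mul (k *: a) b = k *: mul a b
                                  /\ mul a (k *: b) = k *: mul a b) /\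
      (forall a : A, star (star a) = a) /\
      (forall a b : A, star (a + b) = star a + star b) /\
      (forall (k : R[i]) (a : A), star (k *: a) = (k^*)%C *: star a) /\
      (forall a b : A, star (mul a b) = mul (star b) (star a)) /\
      (forall a b : A, `|mul a b| <= `|a| * `|b|) /\
      (forall a : A, `|mul (star a) a| = `|a| ^+ 2).

Definition is_star_hom (R : realType) (A : completeNormedModType R[i])
    (mul : A -> A -> A) (star : A -> A) (t : A -> A) : Prop :=
  [/\ (forall a b : A, t (a + b) = t a + t b),
      (forall (k : R[i]) (a : A), t (k *: a) = k *: t a),
      (forall a b : A, t (mul a b) = mul (t a) (t b)) &
      (forall a : A, t (star a) = star (t a))].

(* Finite product x_1 x_2 ... x_n of a nonempty list (0 for the empty list,
   which is never used below since words are required to be nonempty). *)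
Definition word_prod (T : zmodType) (mul : T -> T -> T) (s : seq T) : T :=
  if s is x :: s' then foldl mul x s' else 0.

(* p(V): all finite complex linear combinations of finite (nonempty) products
   of elements of V ∪ V^*. *)
Definition pstar (R : realType) (A : completeNormedModType R[i])
    (mul : A -> A -> A) (star : A -> A) (V : set A) : set A :=
  [set x | exists (n : nat) (c : 'I_n -> R[i]) (w : 'I_n -> seq A),
      (forall i, w i != [::]) /\
      (forall i a, a \in w i -> V a \/ exists2 b, V b & a = star b) /\
      x = \sum_(i < n) c i *: word_prod mul (w i)].

Definition totally_bounded_set (R : realType) (A : completeNormedModType R[i])
    (B : set A) : Prop :=
  forall eps : R, 0 < eps ->
    exists F : seq A, forall b, B b -> exists2 f, f \in F & `|b - f| < eps%:C.

From HB Require Import structures.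
From mathcomp Require Import all_boot all_order all_algebra.
From mathcomp Require Import all_classical all_reals all_analysis.
From mathcomp Require Import complex.
From mathcomp Require Import ring lra.
Import Order.TTheory GRing.Theory Num.Theory.
Import numFieldNormedType.Exports.
Local Open Scope classical_set_scope.
Local Open Scope ring_scope.
Set Implicit Arguments. Unset Strict Implicit. Unset Printing Implicit Defensive.

(* Every *-homomorphism tau of a C*-algebra is 3-Lipschitz.  For self-adjoint h
   with ||h|| <= 1/2 there is a self-adjoint b commuting with h with
   b^2 + 2b + h^2 = 0 (namely b = sqrt(1 - h^2) - 1, a fixed point of the
   contraction x |-> -(h^2 + x^2)/2); its image c = tau b and y = tau h satisfy the
   same relation, and the C*-identity applied to y + ic forces ||y|| <= 3.
   Scaling and ||tau a||^2 = ||tau (a^* a)|| extend this to all a.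
   Families g |-> tau g a that are totally bounded are closed under sums,
   scalar multiples, adjoints and products, so they contain tau g v for every
   v in p(V); since the tau g are uniformly Lipschitz, total boundedness passes
   to the closure of p(V), which is A. *)

Section RealNorm.
Variable R : realType.

(* The norms take values in R[i]; [rnorm] reads them as reals, for [lra]/[nra]. *)
Definition rnorm (V : normedZmodType R[i]) (x : V) : R := complex.Re `|x|.

Lemma ger0_RRe (z : R[i]) : 0 <= z -> (complex.Re z)%:C%C = z.
Proof. by move=> z0; rewrite RRe_real // ger0_real. Qed.

Lemma rnorm_real (r : R) : rnorm r%:C%C = `|r|.
Proof.
apply: complexI; rewrite ger0_RRe // normc_def /= expr0n /= addr0.
by rewrite sqrtr_sqr.
Qed.

Section NormedZmod.
Variable V : normedZmodType R[i].
Implicit Types x y : V.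

Lemma rnormE x : `|x| = (rnorm x)%:C%C.
Proof. by rewrite ger0_RRe. Qed.

Lemma rnorm_ge0 x : 0 <= rnorm x.
Proof. by have := normr_ge0 x; rewrite rnormE -(rmorph0 (real_complex R)) lecR. Qed.

Lemma rnormD x y : rnorm (x + y) <= rnorm x + rnorm y.
Proof. by rewrite -lecR rmorphD /= -!rnormE ler_normD. Qed.

Lemma rnormN x : rnorm (- x) = rnorm x.
Proof. by rewrite /rnorm normrN. Qed.

Lemma rnorm_distC x y : rnorm (x - y) = rnorm (y - x).
Proof. by rewrite /rnorm distrC. Qed.

Lemma rnorm0 : rnorm (0 : V) = 0.
Proof. by rewrite /rnorm normr0. Qed.

Lemma rnorm_ltc x e : (`|x| < e%:C%C) = (rnorm x < e).
Proof. by rewrite rnormE ltcR. Qed.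

Lemma rnorm_double x : rnorm (x + x) = 2 * rnorm x.
Proof. by apply: complexI; rewrite -rnormE -mulr2n normrMn rnormE mulr_natl rmorphMn. Qed.

Lemma rnorm_eq0_small x : (forall r, 0 < r -> rnorm x < r) -> x = 0.
Proof.
move=> small; apply/normr0_eq0; rewrite rnormE; congr (_%:C)%C.
apply/eqP; rewrite eq_le rnorm_ge0 andbT leNgt; apply/negP => /small.
by rewrite ltxx.
Qed.

End NormedZmod.

Section NormedMod.
Variable A : normedModType R[i].
Implicit Types x y l : A.

Lemma rnormZ k x : rnorm (k *: x) = rnorm k * rnorm x.
Proof. by apply: complexI; rewrite rmorphM /= -!rnormE normrZ. Qed.

Lemma cvg_rnorm_lt (u : nat -> A) l : u @ \oo --> l ->
  forall e, 0 < e -> exists N, forall n, (N <= n)%N -> rnorm (u n - l) < e.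
Proof.
move=> ul e e0; have := (@cvgrPdist_lt _ _ _ _ _ u l).1 ul e%:C%C; rewrite ltcR.
by case/(_ _ e0) => N _ near_l; exists N => n /near_l /=; rewrite rnorm_ltc rnorm_distC.
Qed.

Lemma eq_lim_lipschitz (u v : nat -> A) l (f g : A -> A) C :
    u @ \oo --> l -> v @ \oo --> l -> (forall n, f (u n) = g (v n)) ->
    (forall n, rnorm (f (u n) - f l) <= C * rnorm (u n - l)) ->
    (forall n, rnorm (g (v n) - g l) <= C * rnorm (v n - l)) ->
  f l = g l.
Proof.
move=> ul vl fg fC gC; apply/eqP; rewrite -subr_eq0; apply/eqP.
apply: rnorm_eq0_small => r r0.
have C1 : 0 < `|C| + 1 by rewrite ltr_wpDl.
have d0 : 0 < r / (2 * (`|C| + 1)) by rewrite divr_gt0 ?mulr_gt0.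
have dE : r / (2 * (`|C| + 1)) * (2 * (`|C| + 1)) = r by rewrite mulfVK ?gt_eqF ?mulr_gt0.
set d := r / _ in d0 dE.
have [N1 uN] := cvg_rnorm_lt ul d0; have [N2 vN] := cvg_rnorm_lt vl d0.
set n := maxn N1 N2.
have un := uN n (leq_maxl _ _); have vn := vN n (leq_maxr _ _).
have -> : f l - g l = - (f (u n) - f l) + (g (v n) - g l).
  by rewrite fg opprB addrA subrK.
apply: le_lt_trans (rnormD _ _) _; rewrite rnormN.
have := fC n; have := gC n; have := ler_norm C.
have := rnorm_ge0 (u n - l); have := rnorm_ge0 (v n - l); nra.
Qed.

End NormedMod.

Lemma cvg_geometric_steps (A : completeNormedModType R[i]) (u : nat -> A) :
  (forall n, rnorm (u n.+1 - u n) <= 2^-1 ^+ n) -> cvg (u @ \oo).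
Proof.
move=> step; have q0 n : 0 <= 2^-1 ^+ n :> R by rewrite exprn_ge0.
have tail n m : rnorm (u (n + m)%N - u n) <= 2 * 2^-1 ^+ n - 2 * 2^-1 ^+ (n + m).
  elim: m => [|m IH]; first by rewrite addn0 subrr rnorm0 subrr.
  have -> : u (n + m.+1)%N - u n = (u (n + m).+1 - u (n + m)%N) + (u (n + m)%N - u n).
    by rewrite addnS addrA subrK.
  apply: le_trans (rnormD _ _) _; have := step (n + m)%N.
  rewrite addnS exprS; lra.
apply: cauchy_cvg; apply: cauchy_exP => e e0.
have er : 0 < complex.Re e by rewrite -ltcR (ger0_RRe (ltW e0)).
have [n small_n] : exists n, 2 * 2^-1 ^+ n < complex.Re e.
  have half_lt1 : `|2^-1 : R| < 1 by rewrite ger0_norm; lra.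
  have e2 : 0 < complex.Re e / 2 by lra.
  have [n _ near0] := cvg_expr half_lt1 (nbhsx_ballx (0 : R) _ e2).
  exists n; have := near0 n (leqnn n); rewrite /= -ball_normE /= sub0r normrN.
  rewrite ger0_norm //; lra.
exists (u n), n => // m /= nm.
rewrite -ball_normE /= -(ger0_RRe (ltW e0)) rnorm_ltc rnorm_distC -(subnKC nm).
by apply: le_lt_trans (tail _ _) _; have := q0 (n + (m - n))%N; lra.
Qed.

End RealNorm.

Section CstarAlgebra.
Variables (R : realType) (A : completeNormedModType R[i]).
Variables (mul : A -> A -> A) (star : A -> A).
Hypothesis HC : is_Cstar_algebra mul star.

Lemma cmulA a b c : mul a (mul b c) = mul (mul a b) c.
Proof. by case: HC. Qed.
Lemma cmulDr a b c : mul a (b + c) = mul a b + mul a c.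
Proof. by case: HC => _ []. Qed.
Lemma cmulDl a b c : mul (a + b) c = mul a c + mul b c.
Proof. by case: HC => _ [_ []]. Qed.
Lemma cmulZl k a b : mul (k *: a) b = k *: mul a b.
Proof. by case: HC => _ [_ [_ [H _]]]; case: (H k a b). Qed.
Lemma cmulZr k a b : mul a (k *: b) = k *: mul a b.
Proof. by case: HC => _ [_ [_ [H _]]]; case: (H k a b). Qed.
Lemma cstarK a : star (star a) = a.
Proof. by case: HC => _ [_ [_ [_ [H _]]]]. Qed.
Lemma cstarD a b : star (a + b) = star a + star b.
Proof. by case: HC => _ [_ [_ [_ [_ [H _]]]]]. Qed.
Lemma cstarZ k a : star (k *: a) = (k^*)%C *: star a.
Proof. by case: HC => _ [_ [_ [_ [_ [_ [H _]]]]]]. Qed.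
Lemma cstarM a b : star (mul a b) = mul (star b) (star a).
Proof. by case: HC => _ [_ [_ [_ [_ [_ [_ [H _]]]]]]]. Qed.
Lemma rnormM a b : rnorm (mul a b) <= rnorm a * rnorm b.
Proof.
by case: HC => _ [_ [_ [_ [_ [_ [_ [_ [H _]]]]]]]]; rewrite -lecR rmorphM /= -!rnormE.
Qed.
Lemma rnorm_cstar a : rnorm (mul (star a) a) = rnorm a ^+ 2.
Proof.
case: HC => _ [_ [_ [_ [_ [_ [_ [_ [_ H]]]]]]]].
by apply: complexI; rewrite rmorphXn /= -!rnormE.
Qed.

Lemma cmul0l a : mul 0 a = 0.
Proof. by apply/(addrI (mul 0 a)); rewrite -cmulDl !addr0. Qed.
Lemma cmul0r a : mul a 0 = 0.
Proof. by apply/(addrI (mul a 0)); rewrite -cmulDr !addr0. Qed.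
Lemma cmulNl a b : mul (- a) b = - mul a b.
Proof. by apply/(addrI (mul a b)); rewrite -cmulDl !subrr cmul0l. Qed.
Lemma cmulNr a b : mul a (- b) = - mul a b.
Proof. by apply/(addrI (mul a b)); rewrite -cmulDr !subrr cmul0r. Qed.
Lemma cmulBl a b c : mul (a - b) c = mul a c - mul b c.
Proof. by rewrite cmulDl cmulNl. Qed.
Lemma cmulBr a b c : mul a (b - c) = mul a b - mul a c.
Proof. by rewrite cmulDr cmulNr. Qed.
Lemma cstar0 : star 0 = 0.
Proof. by apply/(addrI (star 0)); rewrite -cstarD !addr0. Qed.
Lemma cstarN a : star (- a) = - star a.
Proof. by apply/(addrI (star a)); rewrite -cstarD !subrr cstar0. Qed.
Lemma cstarB a b : star (a - b) = star a - star b.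
Proof. by rewrite cstarD cstarN. Qed.

Lemma rnorm_star a : rnorm (star a) = rnorm a.
Proof.
have le_star b : rnorm b <= rnorm (star b).
  have := rnormM (star b) b; rewrite rnorm_cstar.
  have := rnorm_ge0 b; have := rnorm_ge0 (star b); nra.
by apply/eqP; rewrite eq_le le_star -{2}(cstarK a) le_star.
Qed.

Lemma rnorm_sqr_sa a : star a = a -> rnorm (mul a a) = rnorm a ^+ 2.
Proof. by move=> a_sa; rewrite -{1}a_sa rnorm_cstar. Qed.

(* With w = y + ic one gets w^* w = y^2 + c^2 = -2c, so ||w||^2 = 2||c||, while
   2y = w + w^* gives ||y|| <= ||w|| and c^2 = -2c - y^2 gives
   ||c||^2 <= 2||c|| + ||y||^2. *)
Lemma rnorm_le3_of_sa_quadratic y c :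
    star y = y -> star c = c -> mul y c = mul c y ->
    mul c c + (c + c) + mul y y = 0 ->
  rnorm y <= 3.
Proof.
move=> y_sa c_sa yc quad.
have yy : mul y y = - (mul c c + (c + c)).
  by apply/eqP; rewrite -addr_eq0 addrC quad.
pose w := y + 'i%C *: c.
have w_star : star w = y + (- 'i%C) *: c.
  rewrite /w cstarD cstarZ y_sa c_sa; congr (_ + _ *: _).
  by apply/eqP; rewrite eq_complex /= oppr0 !eqxx.
have ww : mul (star w) w = - (c + c).
  rewrite w_star /w cmulDl !cmulDr !cmulZl !cmulZr yc scalerA.
  have -> : - 'i%C * 'i%C = 1 :> R[i] by rewrite mulNr -expr2 sqr_i opprK.
  by rewrite scale1r scaleNr addrA addrK yy opprD addrAC addNr add0r.
have yw : y + y = w + star w.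
  by rewrite w_star /w addrACA -scalerDl subrr scale0r addr0.
have w_sqr : rnorm w ^+ 2 <= 2 * rnorm c.
  by rewrite -rnorm_cstar ww rnormN rnorm_double.
have y_le_w : 2 * rnorm y <= 2 * rnorm w.
  by rewrite -rnorm_double yw (le_trans (rnormD _ _)) // rnorm_star -mulr2n mulr_natl.
have c_sqr : rnorm c ^+ 2 <= 2 * rnorm c + rnorm y ^+ 2.
  rewrite -(rnorm_sqr_sa c_sa) -(rnorm_sqr_sa y_sa).
  have -> : mul c c = - (c + c) - mul y y by rewrite yy opprK addrCA addNr addr0.
  by rewrite (le_trans (rnormD _ _)) // !rnormN rnorm_double.
have y0 := rnorm_ge0 y; have c0 := rnorm_ge0 c; have w0 := rnorm_ge0 w.
have c_le4 : rnorm c <= 4 by nra.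
nra.
Qed.

End CstarAlgebra.

Section SqrtShift.
Variables (R : realType) (A : completeNormedModType R[i]).
Variables (mul : A -> A -> A) (star : A -> A).
Hypothesis HC : is_Cstar_algebra mul star.
Variable h : A.
Hypotheses (h_sa : star h = h) (h_small : rnorm h <= 2^-1).

Let sqrt_step x := (- 2^-1 : R)%:C%C *: (mul h h + mul x x).
Let sqrt_iter n := iter n sqrt_step 0.

Lemma rnorm_Nhalf : rnorm ((- 2^-1 : R)%:C%C) = 2^-1.
Proof. by rewrite rnorm_real normrN ger0_norm // invr_ge0; lra. Qed.

Lemma sqrt_step_sa x : star x = x -> star (sqrt_step x) = sqrt_step x.
Proof.
by move=> x_sa; rewrite (cstarZ HC) conjc_real (cstarD HC) !(cstarM HC) x_sa h_sa.
Qed.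

Lemma sqrt_step_comm x : mul x h = mul h x -> mul (sqrt_step x) h = mul h (sqrt_step x).
Proof.
move=> xh; rewrite (cmulZl HC) (cmulZr HC) (cmulDl HC) (cmulDr HC).
congr (_ *: (_ + _)); first by rewrite (cmulA HC).
by rewrite -(cmulA HC) xh (cmulA HC) xh -(cmulA HC).
Qed.

Lemma rnorm_sqrt_stepB x y :
  rnorm (sqrt_step x - sqrt_step y) <= 2^-1 * ((rnorm x + rnorm y) * rnorm (x - y)).
Proof.
rewrite -scalerBr rnormZ rnorm_Nhalf ler_pM2l ?invr_gt0 ?ltr0n //.
have -> : mul h h + mul x x - (mul h h + mul y y) = mul x (x - y) + mul (x - y) y.
  by rewrite (cmulBr HC) (cmulBl HC) addrA subrK opprD addrACA subrr add0r.
apply: le_trans (rnormD _ _) _; rewrite mulrDl.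
apply: lerD; apply: le_trans (rnormM HC _ _) _; first by [].
by rewrite mulrC.
Qed.

Lemma rnorm_sqrt_step x : rnorm x <= 4^-1 -> rnorm (sqrt_step x) <= 4^-1.
Proof.
move=> x_small; rewrite rnormZ rnorm_Nhalf.
have := rnormD (mul h h) (mul x x); have := rnormM HC x x; have := rnormM HC h h.
have h0 := rnorm_ge0 h; have x0 := rnorm_ge0 x.
have : rnorm h * rnorm h <= 2^-1 * 2^-1 by rewrite ler_pM.
have : rnorm x * rnorm x <= 4^-1 * 4^-1 by rewrite ler_pM.
lra.
Qed.

Lemma sqrt_iter_inv n : [/\ star (sqrt_iter n) = sqrt_iter n,
  mul (sqrt_iter n) h = mul h (sqrt_iter n) & rnorm (sqrt_iter n) <= 4^-1].
Proof.
elim: n => [|n [IH1 IH2 IH3]].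
  by rewrite /sqrt_iter /= (cstar0 HC) (cmul0l HC) (cmul0r HC) rnorm0; split => //; lra.
rewrite /sqrt_iter iterS -/(sqrt_iter n).
by split; [exact: sqrt_step_sa | exact: sqrt_step_comm | exact: rnorm_sqrt_step].
Qed.

Lemma sqrt_iter_step n : rnorm (sqrt_iter n.+1 - sqrt_iter n) <= 2^-1 ^+ n.
Proof.
elim: n => [|n IH].
  have [_ _] := sqrt_iter_inv 1; rewrite expr0 /sqrt_iter /= subr0; lra.
rewrite /sqrt_iter !iterS -iterS -/(sqrt_iter n.+1) -/(sqrt_iter n).
apply: le_trans (rnorm_sqrt_stepB _ _) _; rewrite exprS.
have [_ _ small1] := sqrt_iter_inv n.+1; have [_ _ small0] := sqrt_iter_inv n.
have := rnorm_ge0 (sqrt_iter n.+1); have := rnorm_ge0 (sqrt_iter n).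
have := rnorm_ge0 (sqrt_iter n.+1 - sqrt_iter n); nra.
Qed.

(* b is sqrt(1 - h^2) - 1, computed inside A since A need not be unital. *)
Lemma exists_sqrt_shift : exists b,
  [/\ star b = b, mul b h = mul h b & mul b b + (b + b) + mul h h = 0].
Proof.
pose l := lim (sqrt_iter @ \oo).
have ul : sqrt_iter @ \oo --> l := cvg_geometric_steps sqrt_iter_step.
have uSl : (fun n => sqrt_iter n.+1) @ \oo --> l by rewrite cvg_shiftS.
have l_sa : star l = l.
  apply: (eq_lim_lipschitz (C := 1) ul ul (f := star) (g := id)) => n.
  - by case: (sqrt_iter_inv n).
  - by rewrite -(cstarB HC) (rnorm_star HC) mul1r.
  - by rewrite mul1r.
have lh : mul l h = mul h l.
  apply: (eq_lim_lipschitz (C := rnorm h) ul ul (f := mul^~ h) (g := mul h)) => n.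
  - by case: (sqrt_iter_inv n).
  - by rewrite -(cmulBl HC) mulrC (rnormM HC).
  - by rewrite -(cmulBr HC) (rnormM HC).
have l_fix : sqrt_step l = l.
  have l0 := rnorm_ge0 l.
  apply: (eq_lim_lipschitz (C := 1 + rnorm l) ul uSl (f := sqrt_step) (g := id)) => // n.
  - apply: le_trans (rnorm_sqrt_stepB _ _) _; have [_ _ un] := sqrt_iter_inv n.
    have := rnorm_ge0 (sqrt_iter n); have := rnorm_ge0 (sqrt_iter n - l); nra.
  - by have := rnorm_ge0 (sqrt_iter n.+1 - l); nra.
exists l; split => //.
have : (2 : R)%:C%C *: l = - (mul h h + mul l l).
  rewrite -{1}l_fix /sqrt_step scalerA -rmorphM /= mulrN mulfV ?pnatr_eq0 //.
  by rewrite rmorphN rmorph1 scaleN1r.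
rewrite rmorph_nat scaler_nat mulr2n => ->.
by rewrite opprD addrCA subrr addr0 addNr.
Qed.

End SqrtShift.

Section StarHom.
Variables (R : realType) (A : completeNormedModType R[i]).
Variables (mul : A -> A -> A) (star : A -> A).
Variable t : A -> A.
Hypothesis Ht : is_star_hom mul star t.

Lemma shomD a b : t (a + b) = t a + t b. Proof. by case: Ht. Qed.
Lemma shomZ k a : t (k *: a) = k *: t a. Proof. by case: Ht. Qed.
Lemma shomM a b : t (mul a b) = mul (t a) (t b). Proof. by case: Ht. Qed.
Lemma shomS a : t (star a) = star (t a). Proof. by case: Ht. Qed.
Lemma shom0 : t 0 = 0.
Proof. by rewrite -(scale0r (0 : A)) shomZ !scale0r. Qed.
Lemma shomB a b : t (a - b) = t a - t b.
Proof. by rewrite shomD -scaleN1r shomZ scaleN1r. Qed.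

Lemma shom_foldl x s : t (foldl mul x s) = foldl mul (t x) (map t s).
Proof. by elim: s x => [//|y s IH] x /=; rewrite IH shomM. Qed.

Lemma shom_word_prod s : t (word_prod mul s) = word_prod mul (map t s).
Proof. by case: s => [|x s] /=; [exact: shom0 | exact: shom_foldl]. Qed.

Hypothesis HC : is_Cstar_algebra mul star.

Lemma rnorm_shom_sa_small h : star h = h -> rnorm h <= 2^-1 -> rnorm (t h) <= 3.
Proof.
move=> h_sa h_small; have [b [b_sa bh quad]] := exists_sqrt_shift HC h_sa h_small.
apply: (rnorm_le3_of_sa_quadratic HC (c := t b)).
- by rewrite -shomS h_sa.
- by rewrite -shomS b_sa.
- by rewrite -!shomM bh.
- by rewrite -!shomM -!shomD quad shom0.
Qed.

Lemma rnorm_shom_sa h : star h = h -> rnorm (t h) <= 6 * rnorm h.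
Proof.
move=> h_sa; have [h0|hn0] := eqVneq h 0.
  by rewrite h0 shom0 !rnorm0 mulr0.
have hpos : 0 < rnorm h.
  rewrite lt0r rnorm_ge0 andbT; apply: contra hn0 => /eqP h0.
  by apply/eqP/rnorm_eq0_small => r r0; rewrite h0.
pose k : R := (2 * rnorm h)^-1.
have k0 : 0 < k by rewrite invr_gt0; lra.
have kh : k * (2 * rnorm h) = 1 by rewrite mulVf ?gt_eqF //; lra.
have kh_sa : star (k%:C%C *: h) = k%:C%C *: h by rewrite (cstarZ HC) conjc_real h_sa.
have kh_small : rnorm (k%:C%C *: h) <= 2^-1.
  by rewrite rnormZ rnorm_real (ger0_norm (ltW k0)) /k invfM -mulrA mulVf ?mulr1 ?gt_eqF.
have := rnorm_shom_sa_small kh_sa kh_small.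
rewrite shomZ rnormZ rnorm_real (ger0_norm (ltW k0)) => kth.
have := rnorm_ge0 (t h); nra.
Qed.

Lemma rnorm_shom a : rnorm (t a) <= 3 * rnorm a.
Proof.
have aa_sa : star (mul (star a) a) = mul (star a) a by rewrite (cstarM HC) (cstarK HC).
have := rnorm_shom_sa aa_sa.
rewrite shomM shomS !(rnorm_cstar HC).
have := rnorm_ge0 a; have := rnorm_ge0 (t a); nra.
Qed.

End StarHom.

Section TotallyBoundedFamilies.
Variables (R : realType) (A : completeNormedModType R[i]) (K : Type).
Implicit Types f p : K -> A.

Definition tbounded f := forall e : R, 0 < e ->
  exists F : seq A, forall g, exists2 x, x \in F & rnorm (f g - x) < e.

Lemma tboundedP f : tbounded f <-> totally_bounded_set [set f g | g in [set: K]].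
Proof.
split=> tb e /tb[F FP]; exists F.
  by move=> _ [g _ <-]; have [x xF fx] := FP g; exists x; rewrite ?rnorm_ltc.
move=> g; have [x xF fx] := FP (f g) (ex_intro2 _ _ g I erefl).
by exists x; rewrite -?rnorm_ltc.
Qed.

Lemma tboundedD f p : tbounded f -> tbounded p -> tbounded (fun g => f g + p g).
Proof.
move=> tbf tbp e e0; have e2 : 0 < e / 2 by lra.
have [F1 F1P] := tbf _ e2; have [F2 F2P] := tbp _ e2.
exists [seq x + y | x <- F1, y <- F2] => g.
have [x xF fx] := F1P g; have [y yF py] := F2P g.
exists (x + y); first exact: allpairs_f.
rewrite opprD addrACA; apply: le_lt_trans (rnormD _ _) _; lra.
Qed.

Lemma tboundedZ k f : tbounded f -> tbounded (fun g => k *: f g).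
Proof.
move=> tbf e e0; have k1 : 0 < rnorm k + 1 by rewrite ltr_wpDl ?rnorm_ge0.
have [F FP] := tbf _ (divr_gt0 e0 k1); exists (map ( *:%R k) F) => g.
have [x xF fx] := FP g; exists (k *: x); first exact: map_f.
rewrite -scalerBr rnormZ; move: fx; rewrite ltr_pdivlMr // => fx.
have := rnorm_ge0 k; have := rnorm_ge0 (f g - x); nra.
Qed.

Lemma tbounded_sum n (F : 'I_n -> K -> A) :
  (forall i, tbounded (F i)) -> tbounded (fun g => \sum_(i < n) F i g).
Proof.
elim: n F => [|n IH] F tbF.
  move=> e e0; exists [:: 0] => g; exists 0; rewrite ?mem_head //.
  by rewrite big_ord0 subrr rnorm0.
have tbS := tboundedD (IH (fun i => F (widen_ord (leqnSn n) i)) (fun i => tbF _))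
  (tbF ord_max).
by move=> e /tbS[G GP]; exists G => g; rewrite big_ord_recr; exact: GP.
Qed.

Lemma tbounded_bounded f : tbounded f -> exists2 M, 0 <= M & forall g, rnorm (f g) <= M.
Proof.
move=> /(_ 1 ltr01)[F FP]; have F0 : 0 <= \sum_(y <- F) rnorm y.
  by rewrite sumr_ge0 // => y _; exact: rnorm_ge0.
exists (\sum_(y <- F) rnorm y + 1) => [|g]; first by rewrite addr_ge0.
have [x xF fx] := FP g; rewrite -(subrK x (f g)) addrC.
apply: le_trans (rnormD _ _) _; apply: lerD; last exact: ltW.
rewrite (big_rem x xF) /= lerDl sumr_ge0 // => y _; exact: rnorm_ge0.
Qed.

Lemma tbounded_approx f :
    (forall e, 0 < e -> exists p, tbounded p /\ forall g, rnorm (f g - p g) <= e) ->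
  tbounded f.
Proof.
move=> approx e e0; have e2 : 0 < e / 2 by lra.
have [p [tbp fp]] := approx _ e2; have [F FP] := tbp _ e2.
exists F => g; have [x xF px] := FP g; exists x => //.
rewrite -(subrK (p g) (f g)) -addrA; apply: le_lt_trans (rnormD _ _) _.
by have := fp g; lra.
Qed.

Variables (mul : A -> A -> A) (star : A -> A).
Hypothesis HC : is_Cstar_algebra mul star.

Lemma tbounded_star f : tbounded f -> tbounded (fun g => star (f g)).
Proof.
move=> tbf e /tbf[F FP]; exists (map star F) => g.
have [x xF fx] := FP g; exists (star x); first exact: map_f.
by rewrite -(cstarB HC) (rnorm_star HC).
Qed.

Lemma tbounded_mul f p : tbounded f -> tbounded p -> tbounded (fun g => mul (f g) (p g)).
Proof.
move=> tbf tbp e e0.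
have [M1 M1_ge0 fM1] := tbounded_bounded tbf.
have [M2 M2_ge0 pM2] := tbounded_bounded tbp.
have D0 : 0 < M1 + M2 + e + 1 by lra.
have dE : e / (M1 + M2 + e + 1) * (M1 + M2 + e + 1) = e by rewrite mulfVK ?gt_eqF.
have d0 : 0 < e / (M1 + M2 + e + 1) by apply: divr_gt0.
set d := e / _ in d0 dE.
have [F1 F1P] := tbf _ d0; have [F2 F2P] := tbp _ d0.
exists [seq mul x y | x <- F1, y <- F2] => g.
have [x xF fx] := F1P g; have [y yF py] := F2P g.
exists (mul x y); first exact: (allpairs_f mul).
have -> : mul (f g) (p g) - mul x y = mul (f g) (p g - y) + mul (f g - x) y.
  by rewrite (cmulBr HC) (cmulBl HC) addrA subrK.
apply: le_lt_trans (rnormD _ _) _.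
have y_le : rnorm y <= M2 + rnorm (p g - y).
  rewrite -{1}(subKr (p g) y); apply: le_trans (rnormD _ _) _.
  by rewrite rnormN lerD.
have := rnormM HC (f g) (p g - y); have := rnormM HC (f g - x) y.
have := fM1 g; have := rnorm_ge0 (f g); have := rnorm_ge0 y.
have := rnorm_ge0 (p g - y); have := rnorm_ge0 (f g - x); nra.
Qed.

Lemma tbounded_foldl f (T : K -> A -> A) s :
    tbounded f -> (forall y, y \in s -> tbounded (T^~ y)) ->
  tbounded (fun g => foldl mul (f g) (map (T g) s)).
Proof.
elim: s f => [|y s IH] f tbf tbs //=.
apply: (IH (fun g => mul (f g) (T g y))) => [|z zs].
  by apply: tbounded_mul => //; apply: tbs; rewrite mem_head.
by apply: tbs; rewrite in_cons zs orbT.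
Qed.

End TotallyBoundedFamilies.

Section GeneratedFamilies.
Variables (R : realType) (A : completeNormedModType R[i]).
Variables (mul : A -> A -> A) (star : A -> A).
Hypothesis HC : is_Cstar_algebra mul star.
Variables (K : Type) (tau : K -> A -> A) (V : set A).
Hypothesis tau_shom : forall g, is_star_hom mul star (tau g).
Hypothesis tbV : forall y, V y -> tbounded (fun g => tau g y).

Lemma tbounded_pstar v : pstar mul star V v -> tbounded (fun g => tau g v).
Proof.
case=> n [c [w [w_nil [w_letters ->]]]].
have tb_letter i y : y \in w i -> tbounded (fun g => tau g y).
  case/w_letters => [/tbV //|[b /tbV tbb ->]].
  have -> : (fun g => tau g (star b)) = (fun g => star (tau g b)).
    by apply: funext => g; rewrite (shomS (tau_shom g)).
  exact: (tbounded_star HC).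
have -> : (fun g => tau g (\sum_(i < n) c i *: word_prod mul (w i))) =
          (fun g => \sum_(i < n) c i *: word_prod mul (map (tau g) (w i))).
  apply: funext => g.
  rewrite (big_morph (tau g) (shomD (tau_shom g)) (shom0 (tau_shom g))).
  by apply: eq_bigr => i _; rewrite (shomZ (tau_shom g)) (shom_word_prod (tau_shom g)).
apply: tbounded_sum => i; apply: tboundedZ.
move: (w_nil i) (tb_letter i); case: (w i) => [//|x s] _ tbw /=.
by apply: (tbounded_foldl HC) => [|y ys]; apply: tbw; rewrite ?mem_head // in_cons ys orbT.
Qed.

End GeneratedFamilies.

Theorem proposition5p3 (R : realType) (A : completeNormedModType R[i])
    (mul : A -> A -> A) (star : A -> A)
    (K : Type) (tau : K -> A -> A) (V : set A) :
  is_Cstar_algebra mul star ->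
  (forall g : K, is_star_hom mul star (tau g)) ->
  closure (pstar mul star V) = setT ->
  (forall g : K, tau g @` V `<=` pstar mul star V) ->
  (forall a : A, V a -> totally_bounded_set [set tau g a | g in [set: K]]) ->
  forall a : A, totally_bounded_set [set tau g a | g in [set: K]].
Proof.
move=> HC tau_shom dense _ tbV a; apply/tboundedP/tbounded_approx => e e0.
have e3 : 0 < e / 3 by lra.
have [v pVv av] : exists2 v, pstar mul star V v & rnorm (a - v) < e / 3.
  have : closure (pstar mul star V) a by rewrite dense.
  case/(_ (ball a (e / 3)%:C%C)); first by apply: nbhsx_ballx; rewrite ltcR.
  by move=> v [pVv]; rewrite -ball_normE /= rnorm_ltc; exists v.
exists (fun g => tau g v); split.
  by apply: (tbounded_pstar HC tau_shom (V := V)) => // y /tbV /tboundedP.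
move=> g; rewrite -(shomB (tau_shom g)).
by apply: le_trans (rnorm_shom (tau_shom g) HC _) _; lra.
Qed.
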